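(* Let $n=2m$ and let $G=(g[i,j])_{1\le i,j\le n}$ be a symmetric matrix of indeterminates ($g[i,j]=g[j,i]$). For distinct indices $i_1,\dots,i_n$ put $g[i_1,\dots,i_m\,|\,i_{m+1},\dots,i_n]=\det\big(g[i_p,i_{m+q}]\big)_{1\le p,q\le m}$. Let $\mathfrak S_n$ act by permuting indices, $g[i,j]\mapsto g[\sigma(i),\sigma(j)]$. Then the $\mathbb{Q}$-linear span of the orbit of $g[1,\dots,m\,|\,m+1,\dots,n]$ under $\mathfrak S_n$ is an irreducible representation of $\mathfrak S_n$ isomorphic to the Specht module of shape $[2^m]$; more precisely, the assignment $g[i_1,\dots,i_m\,|\,i_{m+1},\dots,i_n]\mapsto \Delta^x(i_1,\dots,i_m)\,\Delta^x(i_{m+1},\dots,i_n)$ extends to an $\mathfrak S_n$-equivariant linear isomorphism onto the span of the polynomials $\Delta^x(i_1,\dots,i_m)\Delta^x(i_{m+1},\dots,i_n)$.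
   Context: $\Delta^x(i_1,\dots,i_k)=\prod_{1\le p<q\le k}(x_{i_p}-x_{i_q})$; $\mathfrak S_n$ acts on polynomials in $x_1,\dots,x_n$ by $x_i\mapsto x_{\sigma(i)}$. The shape $[2^m]$ consists of $m$ rows of length $2$ (two columns of height $m$); its Specht module is the span of the polynomials $\Delta^x(i_1,\dots,i_m)\Delta^x(i_{m+1},\dots,i_n)$ for $(i_1,\dots,i_n)$ ranging over permutations of $1,\dots,n$. *)

From mathcomp Require Import all_boot all_order all_algebra all_fingroup.
From mathcomp Require Import mpoly.
Set Implicit Arguments. Unset Strict Implicit. Unset Printing Implicit Defensive.
Import GRing.Theory.
Local Open Scope ring_scope.

Notation idx m := 'I_(m + m).

(* Ambient polynomial ring: Q[y_k | k < n*n]; variable y_(i,j) (i<=j) stands for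
   g[i,j] = g[j,i].  (Variables y_(i,j) with i > j are simply unused.) *)
Definition gring (m : nat) := {mpoly rat[(m + m) * (m + m)]}.

Definition gvar m (i j : idx m) : 'I_((m + m) * (m + m)) := mxvec_index i j.

Definition gdec m (k : 'I_((m + m) * (m + m))) : idx m * idx m :=
  enum_val (cast_ord (esym (mxvec_cast (m + m) (m + m))) k).

Definition g m (i j : idx m) : gring m :=
  if (i <= j)%N then 'X_(gvar i j) else 'X_(gvar j i).

Definition gpact m (s : 'S_(m + m)) (p : gring m) : gring m :=
  p \mPo [tuple g (s (gdec k).1) (s (gdec k).2) | k < (m + m) * (m + m)].

(* g[i_1..i_m | i_{m+1}..i_n] for the arrangement i_k = s k of distinct indices *)
Definition gminor m (s : 'S_(m + m)) : gring m :=
  \det (\matrix_(p < m, q < m) g (s (lshift m p)) (s (rshift m q))).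

Definition xring (m : nat) := {mpoly rat[m + m]}.

Definition xpact m (s : 'S_(m + m)) (p : xring m) : xring m :=
  p \mPo [tuple 'X_(s k) | k < m + m].

Definition xdelta m (s : 'S_(m + m)) : xring m :=
  (\prod_(p < m) \prod_(q < m | (p < q)%N)
      ('X_(s (lshift m p)) - 'X_(s (lshift m q)))) *
  (\prod_(p < m) \prod_(q < m | (p < q)%N)
      ('X_(s (rshift m p)) - 'X_(s (rshift m q)))).

Definition in_span (V : lmodType rat) (S : seq V) (v : V) : Prop :=
  exists c : 'I_(size S) -> rat, v = \sum_(i < size S) c i *: S`_i.

Definition gspan m : gring m -> Prop :=
  in_span [seq gpact s (gminor (1 : 'S_(m + m))) | s <- enum [set: 'S_(m + m)]].

Definition specht2 m : xring m -> Prop :=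
  in_span [seq xdelta s | s <- enum [set: 'S_(m + m)]].

Definition irreducible_rep m (T : lmodType rat)
    (act : 'S_(m + m) -> T -> T) (V : T -> Prop) : Prop :=
  (exists v, V v /\ v <> 0) /\
  forall W : T -> Prop,
    (forall v, W v -> V v) ->
    W 0 ->
    (forall a u v, W u -> W v -> W (a *: u + v)) ->
    (forall s v, W v -> W (act s v)) ->
    (forall v, W v -> v = 0) \/ (forall v, V v -> W v).

(* Evaluating g at the 0/1 adjacency matrices of the perfect matchings of
   {1..n} separates the matching monomials g[i1,j1]...g[im,jm]; hence
   <v, w> = sum_M v(M) w(M) is an S_n-invariant form, positive definite on their
   span, which contains the orbit span.  Write D = g[1..m | m+1..n].  Alternating
   over the permutations of {m+1..n} maps the monomial of a matching M to D(M) D,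
   and multiplies <-, D> by m!.  So an invariant subspace containing w <> 0
   contains, after translating w so that <w, D> <> 0, a nonzero multiple of D:
   the span is irreducible.  Substituting g[i,j] := sum_e x_i^e x_j^e turns the
   matrix of D into V1^T V2 with Vandermonde matrices V1, V2, which gives the
   equivariant map onto the Specht module; it is injective by irreducibility. *)

From mathcomp Require Import all_boot all_order all_algebra all_fingroup.
From mathcomp Require Import mpoly.
From Stdlib Require Import Classical_Prop.
Set Implicit Arguments. Unset Strict Implicit. Unset Printing Implicit Defensive.
Import GRing.Theory Num.Theory.
Local Open Scope ring_scope.

Section Spans.
Variable V : lmodType rat.
Implicit Types (W : V -> Prop).

Lemma lincomb_closed W :
    W 0 -> (forall a u v, W u -> W v -> W (a *: u + v)) ->
  forall (J : finType) (c : J -> rat) (F : J -> V),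
    (forall j, W (F j)) -> W (\sum_j c j *: F j).
Proof.
move=> W0 WC J c F WF; apply: (big_ind W) => // [x y Wx Wy|j _].
  by rewrite -[x]scale1r; apply: WC.
by rewrite -[_ *: _]addr0; apply: WC.
Qed.

Variable T : finType.
Implicit Types F : T -> V.

Definition span_of F (v : V) : Prop := exists c : T -> rat, v = \sum_s c s *: F s.

Lemma span_of0 F : span_of F 0.
Proof. by exists (fun=> 0); rewrite big1 // => s _; rewrite scale0r. Qed.

Lemma span_ofD F a u v : span_of F u -> span_of F v -> span_of F (a *: u + v).
Proof.
move=> [c ->] [d ->]; exists (fun s => a * c s + d s).
rewrite scaler_sumr -big_split; apply: eq_bigr => s _.
by rewrite scalerA scalerDl.
Qed.

Lemma span_of_gen F s : span_of F (F s).
Proof.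
exists (fun t => (t == s)%:R); rewrite (bigD1 s) //= eqxx scale1r.
by rewrite big1 ?addr0 // => t /negbTE ->; rewrite scale0r.
Qed.

Lemma span_of_min F W :
    W 0 -> (forall a u v, W u -> W v -> W (a *: u + v)) -> (forall s, W (F s)) ->
  forall v, span_of F v -> W v.
Proof. by move=> W0 WC WF v [c ->]; apply: lincomb_closed. Qed.

Lemma in_span_enumP (x0 : T) F v :
  in_span [seq F s | s <- enum [set: T]] v <-> span_of F v.
Proof.
set E := enum [set: T]; set S := [seq F s | s <- E].
have sizeS : size S = size E by rewrite size_map.
have sum_enum (G : T -> V) : \sum_(i < size S) G (nth x0 E i) = \sum_s G s.
  transitivity (\sum_(s <- E) G s); first by rewrite sizeS (big_nth x0) big_mkord.
  by rewrite big_enum /=; apply: eq_bigl => s; rewrite in_setT.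
have nthS (i : 'I_(size S)) : S`_i = F (nth x0 E i).
  by rewrite (nth_map x0) // -sizeS.
split=> [[c ->]|[c ->]]; last first.
  exists (fun i => c (nth x0 E i)); rewrite -sum_enum.
  by apply: eq_bigr => i _; rewrite nthS.
have S_gt0 : (0 < size S)%N by rewrite sizeS -cardE; apply/card_gt0P; exists x0; rewrite in_setT.
pose i0 := Ordinal S_gt0.
exists (fun s => c (insubd i0 (index s E))); rewrite -sum_enum.
apply: eq_bigr => i _; rewrite nthS index_uniq ?enum_uniq -?sizeS //.
congr (c _ *: _); apply: val_inj; rewrite /= insubdK //.
exact: ltn_ord.
Qed.

End Spans.

Lemma irreducible_rep_inj m (T U : lmodType rat) (act : 'S_(m + m) -> T -> T)
    (V : T -> Prop) (f : T -> U) :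
    irreducible_rep act V ->
    V 0 -> (forall a u v, V u -> V v -> V (a *: u + v)) ->
    (forall s v, V v -> V (act s v)) ->
    linear f -> (forall s v, V v -> f v = 0 -> f (act s v) = 0) ->
    (exists2 v, V v & f v <> 0) ->
  forall u v, V u -> V v -> f u = f v -> u = v.
Proof.
move=> [_ irr] V0 VC Vact flin fact [w Vw fw] u v Vu Vv fuv.
have f0 : f 0 = 0 by move: (flin (-1) 0 0); rewrite scaler0 addr0 scaleN1r addNr.
pose K x := V x /\ f x = 0.
have KD a x y : K x -> K y -> K (a *: x + y).
  by move=> [Vx fx] [Vy fy]; split; [apply: VC | rewrite flin fx fy scaler0 addr0].
have Kact s x : K x -> K (act s x).
  by move=> [Vx fx]; split; [apply: Vact | apply: fact].
case: (irr K (fun x => @proj1 _ _) (conj V0 f0) KD Kact) => [ker0|kerV].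
  apply/eqP; rewrite -subr_eq0; apply/eqP/ker0; rewrite addrC -scaleN1r.
  by split; [apply: VC | rewrite flin fuv scaleN1r addNr].
by have [] := kerV w Vw.
Qed.

Lemma comp_mpolyA (k1 k2 k3 : nat) (p : {mpoly rat[k1]})
    (L1 : k1.-tuple {mpoly rat[k2]}) (L2 : k2.-tuple {mpoly rat[k3]}) :
  (p \mPo L1) \mPo L2 = p \mPo [tuple tnth L1 i \mPo L2 | i < k1].
Proof.
rewrite [p \mPo L1]comp_mpolyEX [RHS]comp_mpolyEX raddf_sum /=.
apply: eq_bigr => mm _; rewrite comp_mpolyZ !comp_mpolyX rmorph_prod.
by congr (_ *: _); apply: eq_bigr => i _; rewrite rmorphXn tnth_mktuple.
Qed.

Section Matchings.
Variable m : nat.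
Implicit Types t u : 'S_(m + m).
Local Notation n := (m + m).
Local Notation lsh := (@lshift m m).
Local Notation rsh := (@rshift m m).

Lemma split_lshift (p : 'I_m) : split (lsh p) = inl p.
Proof. exact: (unsplitK (inl _ p)). Qed.

Lemma split_rshift (p : 'I_m) : split (rsh p) = inr p.
Proof. exact: (unsplitK (inr _ p)). Qed.

Definition swap_halves_fun (x : 'I_n) : 'I_n :=
  match split x with inl p => rsh p | inr q => lsh q end.

Lemma swap_halves_funK : involutive swap_halves_fun.
Proof.
move=> x; case: (split_ordP x) => p ->;
  by rewrite /swap_halves_fun ?split_lshift ?split_rshift /= ?split_lshift ?split_rshift.
Qed.

Definition swap_halves : 'S_n := perm (can_inj swap_halves_funK).

Lemma swap_halvesK : involutive swap_halves.
Proof. by move=> x; rewrite !permE swap_halves_funK. Qed.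

Lemma swap_halves_l p : swap_halves (lsh p) = rsh p.
Proof. by rewrite permE /swap_halves_fun split_lshift. Qed.

Lemma swap_halves_r p : swap_halves (rsh p) = lsh p.
Proof. by rewrite permE /swap_halves_fun split_rshift. Qed.

Lemma swap_halves_neq x : swap_halves x != x.
Proof.
by case: (split_ordP x) => p ->; rewrite ?swap_halves_l ?swap_halves_r
  ?eq_rlshift ?eq_lrshift.
Qed.

Definition rperm_fun (s : 'S_m) (x : 'I_n) : 'I_n :=
  match split x with inl p => lsh p | inr q => rsh (s q) end.

Lemma rperm_funK s : cancel (rperm_fun s) (rperm_fun s^-1).
Proof.
move=> x; case: (split_ordP x) => p ->;
  by rewrite /rperm_fun ?split_lshift ?split_rshift /= ?split_lshift ?split_rshift ?permK.
Qed.

Definition rperm (s : 'S_m) : 'S_n := perm (can_inj (rperm_funK s)).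

Lemma rperm_l s p : rperm s (lsh p) = lsh p.
Proof. by rewrite permE /rperm_fun split_lshift. Qed.

Lemma rperm_r s q : rperm s (rsh q) = rsh (s q).
Proof. by rewrite permE /rperm_fun split_rshift. Qed.

Lemma rpermM a b : rperm (a * b) = (rperm a * rperm b)%g.
Proof.
apply/permP => x; case: (split_ordP x) => p ->.
  by rewrite permM !rperm_l.
by rewrite permM !rperm_r permM.
Qed.

Lemma rperm1 : rperm 1 = 1%g.
Proof.
apply/permP => x; case: (split_ordP x) => p ->.
  by rewrite rperm_l perm1.
by rewrite rperm_r !perm1.
Qed.

Lemma rpermV s : rperm s^-1%g = (rperm s)^-1%g.
Proof. by apply/eqP; rewrite eq_sym eq_invg_mul -rpermM mulgV rperm1. Qed.

Lemma rperm_tperm a b : rperm (tperm a b) = tperm (rsh a) (rsh b).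
Proof.
apply/permP => x; case: (split_ordP x) => p ->.
  by rewrite rperm_l tpermD // eq_rlshift.
rewrite rperm_r; case: tpermP => [->|->|pa pb]; rewrite ?tpermL ?tpermR //.
by rewrite tpermD //; rewrite eq_rshift eq_sym; exact/eqP.
Qed.

(* The perfect matching {t(p), t(m+p)} of t, as a fixed-point-free involution. *)
Definition partner (t : 'S_n) : 'S_n := (swap_halves ^ t)%g.

Lemma partnerE t x : partner t x = t (swap_halves (t^-1%g x)).
Proof. by rewrite /partner /conjg !permM. Qed.

Lemma partnerM t s : partner (t * s)%g = (partner t ^ s)%g.
Proof. exact: conjgM. Qed.

Lemma partner_l t p : partner t (t (lsh p)) = t (rsh p).
Proof. by rewrite partnerE permK swap_halves_l. Qed.

Lemma partner_r t p : partner t (t (rsh p)) = t (lsh p).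
Proof. by rewrite partnerE permK swap_halves_r. Qed.

Lemma partnerK t : involutive (partner t).
Proof. by move=> x; rewrite !partnerE permK swap_halvesK permKV. Qed.

Lemma partner_neq t x : partner t x != x.
Proof.
rewrite partnerE -{2}(permKV t x) (inj_eq perm_inj); exact: swap_halves_neq.
Qed.

Lemma eq_partnerP t u :
  reflect (forall p, partner u (t (lsh p)) = t (rsh p)) (partner t == partner u).
Proof.
apply: (iffP eqP) => [<- p|E]; first exact: partner_l.
apply/permP => x; rewrite -(permKV t x); case: (split_ordP (t^-1%g x)) => p ->.
  by rewrite partner_l E.
by rewrite partner_r -E partnerK.
Qed.

Lemma partner_rperm_inj : injective (fun s => partner (rperm s)).
Proof.
move=> a b /eqP/eq_partnerP E; apply/permP => p.
have := E p; rewrite rperm_l -{1}(rperm_l b p) partner_l !rperm_r.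
by move=> /rshift_inj ->.
Qed.

End Matchings.

Section MatchingMonomials.
Variable m : nat.
Local Notation n := (m + m).
Local Notation lsh := (@lshift m m).
Local Notation rsh := (@rshift m m).
Implicit Types (s t u : 'S_n) (v w : gring m).

Lemma gdec_gvar (i j : 'I_n) : gdec (gvar i j) = (i, j).
Proof. by rewrite /gdec /gvar /mxvec_index cast_ordK enum_rankK. Qed.

Lemma g_sym (i j : 'I_n) : g i j = g j i.
Proof.
rewrite /g; case: ltngtP => [//|//|/val_inj eij].
by rewrite eij.
Qed.

Lemma gpact_g s (i j : 'I_n) : gpact s (g i j) = g (s i) (s j).
Proof.
rewrite /gpact /g; case: ifP => _;
  rewrite comp_mpolyXU -tnth_nth tnth_mktuple gdec_gvar //=; exact: g_sym.
Qed.

Lemma gpact_sum s (J : finType) (c : J -> rat) (F : J -> gring m) :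
  gpact s (\sum_j c j *: F j) = \sum_j c j *: gpact s (F j).
Proof. by rewrite /gpact raddf_sum; apply: eq_bigr => j _; apply: comp_mpolyZ. Qed.

Lemma gpact_gminor s t : gpact s (gminor t) = gminor (t * s).
Proof.
rewrite /gminor /gpact -det_map_mx; congr (\det _); apply/matrixP => p q.
by rewrite !mxE !permM; apply: gpact_g.
Qed.

Definition gmono t : gring m := \prod_(p < m) g (t (lsh p)) (t (rsh p)).

Lemma gpact_gmono s t : gpact s (gmono t) = gmono (t * s).
Proof.
rewrite /gmono /gpact rmorph_prod; apply: eq_bigr => p _.
by rewrite !permM; apply: gpact_g.
Qed.

Lemma gmonoE t : gmono t = \prod_(i : 'I_n | (i < partner t i)%N) g i (partner t i).
Proof.
pose F (i : 'I_n) := if (i < partner t i)%N then g i (partner t i) else 1.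
transitivity (\prod_(p < m) (F (t (lsh p)) * F (t (rsh p)))).
  apply: eq_bigr => p _; rewrite /F partner_l partner_r.
  case: ltngtP => [_|_|/val_inj/perm_inj/eqP]; first by rewrite mulr1.
    by rewrite mul1r g_sym.
  by rewrite eq_lrshift.
rewrite [RHS]big_mkcond [RHS](reindex_inj (@perm_inj _ t)) [RHS]big_split_ord.
by rewrite big_split.
Qed.

Lemma eq_gmono t u : partner t = partner u -> gmono t = gmono u.
Proof. by rewrite !gmonoE => ->. Qed.

Definition adj_eval t v : rat :=
  v.@[fun k => (partner t (gdec k).1 == (gdec k).2)%:R].

Lemma adj_eval_g t (i j : 'I_n) : adj_eval t (g i j) = (partner t i == j)%:R.
Proof.
rewrite /adj_eval /g; case: ifP => _; rewrite mevalXU gdec_gvar //=.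
suff -> : (partner t j == i) = (partner t i == j) by [].
by apply/eqP/eqP => <-; rewrite partnerK.
Qed.

Lemma adj_eval_sum t (J : finType) (c : J -> rat) (F : J -> gring m) :
  adj_eval t (\sum_j c j *: F j) = \sum_j c j * adj_eval t (F j).
Proof. by rewrite /adj_eval raddf_sum; apply: eq_bigr => j _; apply: mevalZ. Qed.

Lemma adj_eval_prod t (F : 'I_m -> gring m) :
  adj_eval t (\prod_p F p) = \prod_p adj_eval t (F p).
Proof. exact: rmorph_prod. Qed.

Lemma adj_eval_gpact t s v : adj_eval t (gpact s v) = adj_eval (t * s^-1) v.
Proof.
rewrite /adj_eval /gpact comp_mpoly_meval; apply: meval_eq => k.
rewrite tnth_mktuple; apply: etrans (adj_eval_g _ _ _) _.
by rewrite partnerM /conjg !permM invgK -(inj_eq (@perm_inj _ s^-1%g)) permK.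
Qed.

Lemma adj_eval_gmono t u : adj_eval u (gmono t) = (partner t == partner u)%:R.
Proof.
rewrite /gmono adj_eval_prod.
case: (boolP [forall p, partner u (t (lsh p)) == t (rsh p)]) => [/forallP E|].
  have -> : partner t == partner u by apply/eq_partnerP => p; apply/eqP.
  by apply: big1 => p _; rewrite adj_eval_g E.
move=> /forallPn[p Ep]; have -> : (partner t == partner u) = false.
  by apply: contraNF Ep => /eq_partnerP ->.
by rewrite (bigD1 p) //= adj_eval_g (negbTE Ep) mul0r.
Qed.

Definition fiber t : rat := #|[pred u | partner t == partner u]|%:R.

Lemma fiber_neq0 t : fiber t != 0.
Proof. by rewrite pnatr_eq0 -lt0n; apply/card_gt0P; exists t; rewrite inE. Qed.

Lemma span_gmono_interpolation v : span_of gmono v ->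
  v = \sum_t ((fiber t)^-1 * adj_eval t v) *: gmono t.
Proof.
move=> [c ->]; under [RHS]eq_bigr do rewrite adj_eval_sum mulr_sumr scaler_suml.
rewrite exchange_big; apply: eq_bigr => u _.
transitivity (\sum_(t in [pred t | partner u == partner t])
                ((fiber u)^-1 * c u) *: gmono u).
  by rewrite sumr_const -scaler_nat scalerA mulrA mulfV ?fiber_neq0 ?mul1r.
rewrite big_mkcond; apply: eq_bigr => t _; rewrite inE adj_eval_gmono.
case: eqP => [e|_]; last by rewrite !mulr0 scale0r.
by rewrite (eq_gmono e) /fiber e mulr1.
Qed.

Lemma span_gmono_eq0 v :
  span_of gmono v -> (forall t, adj_eval t v = 0) -> v = 0.
Proof.
move=> vspan v0; rewrite (span_gmono_interpolation vspan).
by apply: big1 => t _; rewrite v0 mulr0 scale0r.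
Qed.

Definition gform v w : rat := \sum_t adj_eval t v * adj_eval t w.

Lemma gform_gpact s v w : gform (gpact s v) w = gform v (gpact s^-1 w).
Proof.
rewrite /gform [LHS](reindex_inj (mulIg s)) /=.
by apply: eq_bigr => t _; rewrite !adj_eval_gpact invgK mulgK.
Qed.

Lemma gform_sumr v (J : finType) (c : J -> rat) (F : J -> gring m) :
  gform v (\sum_j c j *: F j) = \sum_j c j * gform v (F j).
Proof.
rewrite /gform; under eq_bigr do rewrite adj_eval_sum mulr_sumr.
rewrite exchange_big; apply: eq_bigr => j _; rewrite mulr_sumr.
by apply: eq_bigr => t _; rewrite mulrCA.
Qed.

Lemma gformZr v c w : gform v (c *: w) = c * gform v w.
Proof.
by rewrite /gform mulr_sumr; apply: eq_bigr => t _; rewrite /adj_eval mevalZ mulrCA.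
Qed.

Lemma gformC v w : gform v w = gform w v.
Proof. by apply: eq_bigr => t _; rewrite mulrC. Qed.

Lemma gform_self_neq0 v : span_of gmono v -> v != 0 -> gform v v != 0.
Proof.
move=> vspan vnz; have sq_ge0 t : 0 <= adj_eval t v * adj_eval t v.
  by rewrite -expr2 sqr_ge0.
apply/eqP => /(psumr_eq0P (fun t _ => sq_ge0 t)) v0.
move/eqP: vnz; apply; apply: span_gmono_eq0 => // t.
by have /eqP := v0 t isT; rewrite mulf_eq0 orbb => /eqP.
Qed.

End MatchingMonomials.

Section RightAlternation.
Variable m : nat.
Local Notation n := (m + m).
Local Notation lsh := (@lshift m m).
Local Notation rsh := (@rshift m m).
Implicit Types (s t : 'S_n) (x y : 'S_m) (v w : gring m).

Definition psign x : rat := (-1) ^+ x.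

Lemma psignM x y : psign (x * y) = psign x * psign y.
Proof. by rewrite /psign odd_permM signr_addb. Qed.

Lemma psignV x : psign x^-1%g = psign x.
Proof. by rewrite /psign odd_permV. Qed.

Lemma psign_tperm (q1 q2 : 'I_m) : q1 != q2 -> psign (tperm q1 q2) = -1.
Proof. by rewrite /psign odd_tperm => ->. Qed.

Lemma sum_psign_mull (V : lmodType rat) (F : 'S_m -> V) y :
  \sum_x psign x *: F (y * x)%g = psign y *: \sum_x psign x *: F x.
Proof.
rewrite (reindex_inj (mulgI y^-1%g)) /= scaler_sumr; apply: eq_bigr => x _.
by rewrite mulKVg psignM psignV scalerA.
Qed.

Lemma sum_psign_mulr (V : lmodType rat) (F : 'S_m -> V) y :
  \sum_x psign x *: F (x * y)%g = psign y *: \sum_x psign x *: F x.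
Proof.
rewrite (reindex_inj (mulIg y^-1%g)) /= scaler_sumr; apply: eq_bigr => x _.
by rewrite mulgKV psignM psignV scalerA mulrC.
Qed.

Lemma gminorE s : gminor s = \sum_x psign x *: gmono (rperm x * s).
Proof.
rewrite /gminor /determinant; apply: eq_bigr => x _.
rewrite /psign mulr_sign scaler_sign; congr (if _ then - _ else _);
  by apply: eq_bigr => p _; rewrite mxE !permM rperm_l rperm_r.
Qed.

Lemma gminor_rperm y : gminor (rperm y) = psign y *: gminor 1.
Proof.
rewrite !gminorE -sum_psign_mulr; apply: eq_bigr => x _.
by rewrite mulg1 rpermM.
Qed.

Lemma span_gmono_gminor s : span_of (@gmono m) (gminor s).
Proof.
by rewrite gminorE; apply: lincomb_closed => [||x]; [apply: span_of0 |
  apply: span_ofD | apply: span_of_gen].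
Qed.

Lemma adj_eval_gminor1 t :
  adj_eval t (gminor 1) = \sum_x psign x * (partner (rperm x) == partner t)%:R.
Proof.
by rewrite gminorE adj_eval_sum; apply: eq_bigr => x _; rewrite mulg1 adj_eval_gmono.
Qed.

Lemma adj_eval_gminor1_rperm t y :
  partner t = partner (rperm y) -> adj_eval t (gminor 1) = psign y.
Proof.
move=> ty; rewrite adj_eval_gminor1 (bigD1 y) //= ty eqxx mulr1 big1 ?addr0 //.
by move=> x /negbTE xy; rewrite (inj_eq (@partner_rperm_inj m)) xy mulr0.
Qed.

Lemma adj_eval_gminor1_inner t (q1 q2 : 'I_m) :
  partner t (rsh q1) = rsh q2 -> adj_eval t (gminor 1) = 0.
Proof.
move=> e12; rewrite adj_eval_gminor1 big1 // => x _.
case: eqP => [ex|]; last by rewrite mulr0.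
move: e12; rewrite -ex -(permKV x q1) -rperm_r partner_r rperm_l => /eqP.
by rewrite eq_lrshift.
Qed.

Definition ralt v : gring m := \sum_x psign x *: gpact (rperm x) v.

Lemma ralt_sum (J : finType) (c : J -> rat) (F : J -> gring m) :
  ralt (\sum_j c j *: F j) = \sum_j c j *: ralt (F j).
Proof.
rewrite /ralt; under eq_bigr do rewrite gpact_sum scaler_sumr.
rewrite exchange_big; apply: eq_bigr => j _; rewrite scaler_sumr.
by apply: eq_bigr => x _; rewrite !scalerA mulrC.
Qed.

Lemma ralt_gmonoE t : ralt (gmono t) = \sum_x psign x *: gmono (t * rperm x).
Proof. by apply: eq_bigr => x _; rewrite gpact_gmono. Qed.

Lemma ralt_gmono_cross t y :
  partner t = partner (rperm y) -> ralt (gmono t) = psign y *: gminor 1.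
Proof.
move=> ty; rewrite ralt_gmonoE gminorE -sum_psign_mull; apply: eq_bigr => x _.
rewrite mulg1 rpermM; congr (_ *: _); apply: (@eq_gmono m).
by rewrite !partnerM ty.
Qed.

(* A right-half transposition fixing the matching of t is absorbed by the
   alternation with sign -1. *)
Lemma ralt_gmono_inner t (q1 q2 : 'I_m) :
  q1 != q2 -> partner t (rsh q1) = rsh q2 -> ralt (gmono t) = 0.
Proof.
move=> q12 e12; set T := tperm (rsh q1) (rsh q2).
have e21 : partner t (rsh q2) = rsh q1 by rewrite -e12 partnerK.
have TC : (T * partner t = partner t * T)%g by rewrite conjgC tpermJ e12 e21 tpermC.
have tT : partner (t * T) = partner t by rewrite partnerM /conjg -TC mulKg.
set S := ralt (gmono t).
have SN : S = - S.
  rewrite -scaleN1r -(psign_tperm q12) -sum_psign_mull /S ralt_gmonoE.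
  apply: eq_bigr => x _; congr (_ *: _); rewrite gpact_gmono; apply: (@eq_gmono m).
  by rewrite rpermM rperm_tperm mulgA (partnerM (t * T)) tT -partnerM.
have : 2%:R *: S = 0 by rewrite scaler_nat mulr2n {1}SN addNr.
by move/eqP; rewrite scaler_eq0 pnatr_eq0 => /eqP.
Qed.

Lemma partner_cross_or_inner t :
  (exists y, partner t = partner (rperm y)) \/
  (exists q1 q2, q1 != q2 /\ partner t (rsh q1) = rsh q2).
Proof.
case: (boolP [forall q, exists p, partner t (rsh q) == lsh p]); last first.
  move=> /forallPn[q /existsPn noleft]; right.
  case: (split_ordP (partner t (rsh q))) => [p e|q' e].
    by have := noleft p; rewrite e eqxx.
  exists q, q'; split=> //; apply: contraNneq (partner_neq t (rsh q)) => qq'.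
  by rewrite e qq'.
move=> /forallP cross; left.
pose pi q := odflt q [pick p | partner t (rsh q) == lsh p].
have piE q : partner t (rsh q) = lsh (pi q).
  by rewrite /pi; case: pickP => [p /eqP //|none]; case/existsP: (cross q) => p; rewrite none.
have pi_inj : injective pi.
  by move=> a b /(congr1 lsh); rewrite -!piE => /perm_inj/rshift_inj.
exists (perm pi_inj)^-1%g; apply/esym/eqP/eq_partnerP => p.
rewrite rperm_l rperm_r -{1}[p](permKV (perm pi_inj)) permE -piE.
by rewrite partnerK.
Qed.

Lemma ralt_gmono t : ralt (gmono t) = adj_eval t (gminor 1) *: gminor 1.
Proof.
case: (partner_cross_or_inner t) => [[y ty]|[q1 [q2 [q12 e12]]]].
  by rewrite (ralt_gmono_cross ty) (adj_eval_gminor1_rperm ty).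
by rewrite (ralt_gmono_inner q12 e12) (adj_eval_gminor1_inner e12) scale0r.
Qed.

Lemma ralt_span v : span_of (@gmono m) v -> exists lam, ralt v = lam *: gminor 1.
Proof.
move=> [c ->]; exists (\sum_t c t * adj_eval t (gminor 1)).
rewrite ralt_sum scaler_suml; apply: eq_bigr => t _.
by rewrite ralt_gmono scalerA.
Qed.

Lemma gform_ralt v : gform (ralt v) (gminor 1) = m`!%:R * gform v (gminor 1).
Proof.
rewrite gformC gform_sumr -card_Sn -sum1_card natr_sum mulr_suml.
apply: eq_bigr => x _; rewrite gformC gform_gpact gpact_gminor mul1g -rpermV.
by rewrite gminor_rperm gformZr psignV mulrA /psign -signr_addb addbb.
Qed.

End RightAlternation.

Section Irreducibility.
Variable m : nat.
Local Notation n := (m + m).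
Implicit Types (s t u : 'S_n) (v w : gring m).

Lemma gspanP v : gspan v <-> span_of (@gminor m) v.
Proof.
rewrite /gspan (in_span_enumP 1%g).
by split=> -[c ->]; exists c; apply: eq_bigr => s _; rewrite gpact_gminor mul1g.
Qed.

Lemma gspan0 : gspan (0 : gring m).
Proof. exact/gspanP/span_of0. Qed.

Lemma gspanD a v w : gspan v -> gspan w -> gspan (a *: v + w).
Proof. by move=> /gspanP vs /gspanP ws; apply/gspanP/span_ofD. Qed.

Lemma gspan_gminor s : gspan (gminor s).
Proof. exact/gspanP/span_of_gen. Qed.

Lemma gspan_gpact s v : gspan v -> gspan (gpact s v).
Proof.
move=> /gspanP[c ->]; rewrite gpact_sum.
apply: lincomb_closed => [||t]; [exact: gspan0 | exact: gspanD |].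
by rewrite gpact_gminor; apply: gspan_gminor.
Qed.

Lemma gspan_span_gmono v : gspan v -> span_of (@gmono m) v.
Proof.
move=> /gspanP; apply: span_of_min;
  [exact: span_of0 | exact: span_ofD | exact: span_gmono_gminor].
Qed.

Lemma gminor1_neq0 : gminor (1 : 'S_n) != 0.
Proof.
apply/eqP => g0; have := @adj_eval_gminor1_rperm m 1 1.
rewrite rperm1 g0 /adj_eval meval0 /psign odd_perm1 => /(_ erefl) /eqP.
by rewrite eq_sym oner_eq0.
Qed.

Lemma gspan_gform_neq0 w : gspan w -> w != 0 -> exists u, gform w (gminor u) != 0.
Proof.
move=> ws wnz; have := gform_self_neq0 (gspan_span_gmono ws) wnz.
have [c {2}->] := (gspanP w).1 ws; rewrite gform_sumr.
case: (pickP (fun u => gform w (gminor u) != 0)) => [u wu _|none]; first by exists u.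
by rewrite big1 ?eqxx // => u _; move/negbFE/eqP: (none u) ->; rewrite mulr0.
Qed.

Lemma gspan_irreducible : irreducible_rep (@gpact m) (@gspan m).
Proof.
split; first by exists (gminor 1); split; [exact: gspan_gminor | exact/eqP/gminor1_neq0].
move=> W Wsub W0 WD Wact.
case: (classic (exists w, W w /\ w <> 0)) => [[w [Ww /eqP wnz]]|]; last first.
  by move=> noW; left=> v Wv; apply: NNPP => vnz; apply: noW; exists v.
right; have [u wu] := gspan_gform_neq0 (Wsub w Ww) wnz.
set w' := gpact u^-1 w.
have w'u : gform w' (gminor 1) = gform w (gminor u).
  by rewrite gform_gpact invgK gpact_gminor mul1g.
have [lam Elam] := ralt_span (gspan_span_gmono (gspan_gpact u^-1 (Wsub w Ww))).
have lam0 : lam != 0.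
  apply: contra_neq wu => lam0; apply/eqP; rewrite -w'u.
  have := gform_ralt w'; rewrite Elam lam0 gformC gformZr mul0r.
  by move/esym/eqP; rewrite mulf_eq0 pnatr_eq0 (gtn_eqF (fact_gt0 m)).
have W1 : W (gminor 1).
  have -> : gminor 1 = lam^-1 *: ralt w' + 0.
    by rewrite addr0 Elam scalerA (mulVf lam0) scale1r.
  apply: (WD _ _ _ _ W0); rewrite /ralt; apply: (lincomb_closed W0 WD) => x.
  exact/Wact/Wact.
move=> v /gspanP; apply: (span_of_min W0 WD) => s.
by rewrite -[s]mul1g -gpact_gminor; apply: Wact.
Qed.

End Irreducibility.

Section Vandermonde.
Variable m : nat.
Local Notation n := (m + m).
Local Notation lsh := (@lshift m m).
Local Notation rsh := (@rshift m m).

(* Makes the matrix of [gminor s] the product V1^T V2 of two Vandermonde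
   matrices. *)
Definition phi_var (k : 'I_(n * n)) : xring m :=
  \sum_(e < m) 'X_(gdec k).1 ^+ e * 'X_(gdec k).2 ^+ e.

Definition phi (p : gring m) : xring m := p \mPo [tuple phi_var k | k < n * n].

Lemma phi_g (i j : 'I_n) : phi (g i j) = \sum_(e < m) 'X_i ^+ e * 'X_j ^+ e.
Proof.
rewrite /phi /g; case: ifP => _;
  rewrite comp_mpolyXU -tnth_nth tnth_mktuple /phi_var gdec_gvar //=.
by apply: eq_bigr => e _; rewrite mulrC.
Qed.

Lemma phi_linear : linear phi.
Proof. by move=> a p q; rewrite /phi comp_mpolyD comp_mpolyZ. Qed.

Lemma phi_sum (J : finType) (c : J -> rat) (F : J -> gring m) :
  phi (\sum_j c j *: F j) = \sum_j c j *: phi (F j).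
Proof. by rewrite /phi raddf_sum; apply: eq_bigr => j _; apply: comp_mpolyZ. Qed.

Lemma prod_vandermonde_flip (x : 'I_m -> xring m) :
  \prod_(i < m) \prod_(j < m | (i < j)%N) (x j - x i) =
  (\prod_(i < m) (-1) ^+ #|[pred j : 'I_m | (i < j)%N]|) *
  \prod_(i < m) \prod_(j < m | (i < j)%N) (x i - x j).
Proof.
rewrite -big_split /=; apply: eq_bigr => i _.
by rewrite -prodrN; apply: eq_bigr => j _; rewrite opprB.
Qed.

Lemma phi_gminor (s : 'S_n) : phi (gminor s) = xdelta s.
Proof.
pose a1 : 'rV[xring m]_m := \row_p 'X_(s (lsh p)).
pose a2 : 'rV[xring m]_m := \row_p 'X_(s (rsh p)).
have -> : phi (gminor s) = \det ((Vandermonde m a1)^T *m Vandermonde m a2).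
  rewrite /gminor /phi -det_map_mx; congr (\det _); apply/matrixP => p q.
  rewrite !mxE; apply: etrans (phi_g _ _) _; apply: eq_bigr => e _; by rewrite !mxE.
rewrite det_mulmx det_tr !det_Vandermonde /xdelta.
under eq_bigr do under eq_bigr do rewrite !mxE.
under [X in _ * X]eq_bigr do under eq_bigr do rewrite !mxE.
rewrite (prod_vandermonde_flip (fun p => 'X_(s (lsh p)))).
rewrite (prod_vandermonde_flip (fun p => 'X_(s (rsh p)))).
rewrite mulrACA -big_split /= big1 ?mul1r // => i _.
by rewrite -exprMn mulrNN mulr1 expr1n.
Qed.

Lemma phi_gpact (s : 'S_n) p : phi (gpact s p) = xpact s (phi p).
Proof.
rewrite /phi /gpact /xpact !comp_mpolyA; congr (p \mPo _).
apply: eq_from_tnth => k; rewrite !tnth_mktuple; apply: etrans (phi_g _ _) _.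
rewrite /phi_var rmorph_sum; apply: eq_bigr => e _.
by rewrite rmorphM !rmorphXn /= !comp_mpolyXU -!tnth_nth !tnth_mktuple.
Qed.

Lemma xdelta1_neq0 : xdelta (1 : 'S_n) != 0.
Proof.
have X_inj (i j : 'I_n) : i != j -> ('X_i : xring m) != 'X_j.
  move=> ij; apply/eqP => /(congr1 (meval (fun k => ((k == i)%:R : rat)))).
  by rewrite !mevalXU eqxx eq_sym (negbTE ij) => /eqP; rewrite oner_eq0.
rewrite /xdelta mulf_neq0 //; apply/prodf_neq0 => p _; apply/prodf_neq0 => q pq;
  rewrite subr_eq0 !perm1 X_inj // ?eq_lshift ?eq_rshift;
  by apply: contraTneq pq => ->; rewrite ltnn.
Qed.

End Vandermonde.

Lemma specht2P m (w : xring m) : specht2 w <-> span_of (@xdelta m) w.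
Proof. exact: (in_span_enumP 1%g). Qed.

Theorem mainTheorem3 (m : nat) :
  (forall (s : 'S_(m + m)) v, @gspan m v -> @gspan m (@gpact m s v)) /\
  irreducible_rep (@gpact m) (@gspan m) /\
  exists f : gring m -> xring m,
    (forall s : 'S_(m + m), f (gminor s) = xdelta s) /\
    (forall (a : rat) u v, @gspan m u -> @gspan m v -> f (a *: u + v) = a *: f u + f v) /\
    (forall u v, @gspan m u -> @gspan m v -> f u = f v -> u = v) /\
    (forall v, @gspan m v -> @specht2 m (f v)) /\
    (forall w, @specht2 m w -> exists v, @gspan m v /\ f v = w) /\
    (forall (s : 'S_(m + m)) v, @gspan m v -> f (gpact s v) = xpact s (f v)).
Proof.
have phi_span (c : 'S_(m + m) -> rat) :
    phi (\sum_s c s *: gminor s) = \sum_s c s *: xdelta s.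
  by rewrite phi_sum; apply: eq_bigr => s _; rewrite phi_gminor.
split; first exact: gspan_gpact.
split; first exact: gspan_irreducible.
exists (@phi m); split; first exact: phi_gminor.
split; first by move=> a u v _ _; apply: phi_linear.
split.
  apply: (irreducible_rep_inj (gspan_irreducible m) (gspan0 m) (@gspanD m)
            (@gspan_gpact m) (@phi_linear m)).
    by move=> s v _ pv; rewrite phi_gpact pv /xpact comp_mpoly0.
  by exists (gminor 1); [apply: gspan_gminor | apply/eqP; rewrite phi_gminor xdelta1_neq0].
split; first by move=> v /gspanP[c ->]; apply/specht2P; exists c; apply: phi_span.
split.
  move=> w /specht2P[c ->]; exists (\sum_s c s *: gminor s).
  by split; [apply/gspanP; exists c | apply: phi_span].
by move=> s v _; apply: phi_gpact.
Qed.
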